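(* Let $G$ be a compact simple Lie group of rank $n$ with simple roots $\alpha_1,\dots,\alpha_n\in\mathbb{R}^n$, coroots $\alpha_i^\vee=2\alpha_i/\langle\alpha_i,\alpha_i\rangle$, Weyl group $W$, root lattice $Q=\sum\mathbb{Z}\alpha_i$, weight lattice $P=\{\omega:\langle\omega,\alpha_i^\vee\rangle\in\mathbb{Z}\ \forall i\}$ with fundamental weights $\omega_i$ ($\langle\omega_i,\alpha_j^\vee\rangle=\delta_{ij}$), highest dual root $\eta=m_1^\vee\alpha_1^\vee+\dots+m_n^\vee\alpha_n^\vee$ (the highest root of the root system $\{\alpha^\vee\}$), and $F^\vee=\{a:\langle a,\alpha_i^\vee\rangle\ge0\ \forall i,\ \langle a,\eta\rangle\le1\}$. Fix $M\in\mathbb{N}$, let $W$ act naturally on $\mathbb{R}^n/MQ$, and let $\Lambda_M=MF^\vee\cap P/MQ$ be the set of cosets in $P/MQ$ having a representative in $MF^\vee$. Then: (1) for every $\lambda\in P/MQ$ there exist $\lambda'\in\Lambda_M$ and $w\in W$ with $\lambda=w\lambda'$; (2) if $\lambda,\lambda'\in\Lambda_M$ and $\lambda'=w\lambda$ with $w\in W$, then $\lambda'=\lambda=w\lambda$; (3) if $\lambda=b+MQ$ with $b\in MF^\vee$, then $\mathrm{Stab}^\vee(\lambda)=\{w\in W:w\lambda=\lambda\}$ is isomorphic to $\mathrm{Stab}_{\widehat W^{\mathrm{aff}}}(b/M)=\{w^{\mathrm{aff}}\in\widehat W^{\mathrm{aff}}:w^{\mathrm{aff}}(b/M)=b/M\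}$.
   Context: The dual affine Weyl group $\widehat W^{\mathrm{aff}}=Q\rtimes W$ is the group of affine maps of $\mathbb{R}^n$ generated by $W$ and translations by elements of $Q$; $F^\vee$ is a fundamental region for it. $\Lambda_M$ is represented by the points $t_1\omega_1+\dots+t_n\omega_n$ with $t_i\in\mathbb{Z}^{\ge0}$ and $t_0+\sum t_im_i^\vee=M$. *)

From HB Require Import structures.
From mathcomp Require Import all_boot all_order all_algebra.
From mathcomp Require Import reals.
Set Implicit Arguments. Unset Strict Implicit. Unset Printing Implicit Defensive.
Import Order.TTheory GRing.Theory Num.Theory.
Local Open Scope ring_scope.

Section RootData.
Variables (R : realType) (n : nat).
Notation vec := 'cV[R]_n.
Notation mat := 'M[R]_n.

Definition dot (u v : vec) : R := (u^T *m v) 0 0.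

Definition coroot (a : vec) : vec := (2 / dot a a) *: a.

Definition reflmx (a : vec) : mat := 1%:M - a *m (coroot a)^T.

(* Phi is a reduced, crystallographic, irreducible root system
   (spanning R^n follows from the existence of a base of n roots) *)
Definition is_irred_root_system (Phi : seq vec) : Prop :=
  [/\ Phi != [::] /\ 0 \notin Phi,
      (forall a b, a \in Phi -> b \in Phi -> reflmx a *m b \in Phi),
      (forall a b, a \in Phi -> b \in Phi -> dot b (coroot a) \is a Num.int),
      (forall a (c : R), a \in Phi -> c *: a \in Phi -> c = 1 \/ c = -1) &
      (forall S : pred vec,
         (forall a b, a \in Phi -> b \in Phi -> S a -> ~~ S b -> dot a b = 0) ->
         (forall a, a \in Phi -> S a) \/ (forall a, a \in Phi -> ~~ S a))].

Definition is_base (Phi : seq vec) (alpha : 'I_n -> vec) : Prop :=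
  [/\ (forall i, alpha i \in Phi),
      (forall c : 'I_n -> R, \sum_i c i *: alpha i = 0 -> forall i, c i = 0) &
      (forall b, b \in Phi -> exists k : 'I_n -> int,
          b = \sum_i (k i)%:~R *: alpha i /\
          ((forall i, 0 <= k i) \/ (forall i, k i <= 0)))].

(* eta is the highest root of the dual root system {a^v : a in Phi}
   (with respect to the base of simple coroots alpha_i^v) *)
Definition is_highest_dual_root (Phi : seq vec) (alpha : 'I_n -> vec) (eta : vec)
  : Prop :=
  (exists2 a, a \in Phi & eta = coroot a) /\
  (forall a, a \in Phi -> exists k : 'I_n -> nat,
      eta - coroot a = \sum_i (k i)%:R *: coroot (alpha i)).

Inductive inW (Phi : seq vec) : mat -> Prop :=
| inW1 : inW Phi 1%:M
| inWS a w : a \in Phi -> inW Phi w -> inW Phi (reflmx a *m w).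

Definition inQ (alpha : 'I_n -> vec) (x : vec) : Prop :=
  exists k : 'I_n -> int, x = \sum_i (k i)%:~R *: alpha i.

Definition inP (alpha : 'I_n -> vec) (x : vec) : Prop :=
  forall i, dot x (coroot (alpha i)) \is a Num.int.

Definition inFv (alpha : 'I_n -> vec) (eta : vec) (a : vec) : Prop :=
  (forall i, 0 <= dot a (coroot (alpha i))) /\ dot a eta <= 1.

Definition inMFv (alpha : 'I_n -> vec) (eta : vec) (M : nat) (x : vec) : Prop :=
  exists2 a, inFv alpha eta a & x = M%:R *: a.

Definition congMQ (alpha : 'I_n -> vec) (M : nat) (x y : vec) : Prop :=
  exists2 q, inQ alpha q & x - y = M%:R *: q.

Definition inLambda (alpha : 'I_n -> vec) (eta : vec) (M : nat) (b : vec) : Prop :=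
  inP alpha b /\ exists2 c, inMFv alpha eta M c & congMQ alpha M b c.

Definition inStabv (Phi : seq vec) (alpha : 'I_n -> vec) (M : nat) (b : vec)
  (w : mat) : Prop :=
  inW Phi w /\ congMQ alpha M (w *m b) b.

(* elements of the dual affine Weyl group Q x| W: pairs (w, q) acting by
   x |-> w x + q; group law = composition of affine maps *)
Definition aff_act (g : mat * vec) (x : vec) : vec := g.1 *m x + g.2.
Definition aff_mul (g h : mat * vec) : mat * vec := (g.1 *m h.1, g.1 *m h.2 + g.2).

Definition inAffStab (Phi : seq vec) (alpha : 'I_n -> vec) (x : vec)
  (g : mat * vec) : Prop :=
  [/\ inW Phi g.1, inQ alpha g.2 & aff_act g x = x].

End RootData.

(* F^v is a closed alcove for Q x| W, whose walls are the zero sets of the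
   simple affine roots alpha_1^v, ..., alpha_n^v, 1 - eta.  Existence (1): if
   x = lam/M lies outside F^v, reflecting it in a violated wall decreases its
   distance to a fixed interior point p by a uniform amount, since the affine
   roots take values in (1/M)Z on P/M; so finitely many reflections bring it
   into F^v.  Uniqueness (2): Q x| W is generated by the simple affine
   reflections, and if a word g maps a point x of F^v into F^v then either its
   last letter fixes x or the exchange argument shortens the word, so g x = x.
   Part (3) only uses that w b = b mod MQ iff (w, (b - w b)/M) fixes b/M. *)

From HB Require Import structures.
From mathcomp Require Import all_boot all_order all_algebra.
From mathcomp Require Import reals.
From mathcomp Require Import ring lra zify.
Import Order.TTheory GRing.Theory Num.Theory.
Local Open Scope ring_scope.
Set Implicit Arguments. Unset Strict Implicit. Unset Printing Implicit Defensive.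

Lemma sum_option (V : nmodType) n (F : option 'I_n -> V) :
  \sum_j F j = F None + \sum_i F (Some i).
Proof.
rewrite (bigD1 None) //=; congr (_ + _).
rewrite (reindex_omap Some id) /=; last by case.
by apply: eq_bigl => i; rewrite eqxx.
Qed.

Lemma sum_delta (I : finType) (K : pzRingType) (V : lmodType K) (F : I -> V) j :
  \sum_i (i == j)%:R *: F i = F j.
Proof.
rewrite (bigD1 j) //= eqxx scale1r big1 ?addr0 // => i /negbTE ->.
by rewrite scale0r.
Qed.

Lemma regular_scaleE (K : pzRingType) (c a : K) : c *: (a : K^o) = c * a.
Proof. by []. Qed.

(** * Euclidean space, reflections and affine functionals *)

Section Euclidean.
Variables (R : realType) (n : nat).
Notation vec := 'cV[R]_n.
Notation mat := 'M[R]_n.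
Notation afun := ('cV[R]_n * R^o)%type.
Implicit Types (u v w x y a b : vec) (A B : mat) (g h : mat * vec) (f e : afun).

Lemma dotE u v : dot u v = \sum_k u k 0 * v k 0.
Proof. by rewrite /dot mxE; apply: eq_bigr => k _; rewrite mxE. Qed.
Lemma dotC u v : dot u v = dot v u.
Proof. by rewrite !dotE; apply: eq_bigr => k _; rewrite mulrC. Qed.
Lemma dotDr u v w : dot u (v + w) = dot u v + dot u w.
Proof. by rewrite !dotE -big_split; apply: eq_bigr => k _; rewrite mxE mulrDr. Qed.
Lemma dotDl u v w : dot (u + v) w = dot u w + dot v w.
Proof. by rewrite dotC dotDr !(dotC w). Qed.
Lemma dotZr c u v : dot u (c *: v) = c * dot u v.
Proof. by rewrite !dotE mulr_sumr; apply: eq_bigr => k _; rewrite mxE mulrCA. Qed.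
Lemma dotZl c u v : dot (c *: u) v = c * dot u v.
Proof. by rewrite dotC dotZr dotC. Qed.
Lemma dot0r u : dot u 0 = 0.
Proof. by rewrite -(scale0r 0) dotZr mul0r. Qed.
Lemma dot0l u : dot 0 u = 0.
Proof. by rewrite dotC dot0r. Qed.
Lemma dotNr u v : dot u (- v) = - dot u v.
Proof. by rewrite -scaleN1r dotZr mulN1r. Qed.
Lemma dotNl u v : dot (- u) v = - dot u v.
Proof. by rewrite dotC dotNr dotC. Qed.
Lemma dotBr u v w : dot u (v - w) = dot u v - dot u w.
Proof. by rewrite dotDr dotNr. Qed.
Lemma dotBl u v w : dot (u - v) w = dot u w - dot v w.
Proof. by rewrite dotDl dotNl. Qed.
Lemma dot_sumr (I : finType) (F : I -> vec) u :
  dot u (\sum_i F i) = \sum_i dot u (F i).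
Proof. exact: (big_morph (dot u) (dotDr u) (dot0r u)). Qed.
Lemma dot_suml (I : finType) (F : I -> vec) u :
  dot (\sum_i F i) u = \sum_i dot (F i) u.
Proof. by rewrite dotC dot_sumr; apply: eq_bigr => i _; rewrite dotC. Qed.

Lemma dotvv_ge0 u : 0 <= dot u u.
Proof. by rewrite dotE; apply: sumr_ge0 => k _; rewrite -expr2 sqr_ge0. Qed.
Lemma dotvv_eq0 u : (dot u u == 0) = (u == 0).
Proof.
apply/idP/eqP => [|->]; last by rewrite dot0r.
rewrite dotE psumr_eq0 => [/allP H|k _]; last by rewrite -expr2 sqr_ge0.
apply/matrixP => k j; rewrite ord1 mxE.
by have /eqP := H k (mem_index_enum k); rewrite -expr2 => /eqP; rewrite sqrf_eq0 => /eqP.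
Qed.
Lemma dotvv_gt0 u : u != 0 -> 0 < dot u u.
Proof. by move=> u0; rewrite lt_def dotvv_eq0 u0 dotvv_ge0. Qed.
Lemma dotvv_neq0 u : u != 0 -> dot u u != 0.
Proof. by rewrite dotvv_eq0. Qed.

Lemma mulmx_colI A B : (forall x : vec, A *m x = B *m x) -> A = B.
Proof.
move=> AB; apply: trmx_inj; apply/eqP/mulmxP => u.
by rewrite -[u]trmxK -!trmx_mul AB.
Qed.

Lemma reflmxE a x : reflmx a *m x = x - dot x (coroot a) *: a.
Proof.
rewrite /reflmx mulmxBl mul1mx -mulmxA [(coroot a)^T *m x]mx11_scalar.
by rewrite mul_mx_scalar -/(dot (coroot a) x) dotC.
Qed.

Lemma dot_coroot a : a != 0 -> dot a (coroot a) = 2.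
Proof. by move=> /dotvv_neq0 a0; rewrite /coroot dotZr; field. Qed.

Lemma coroot0 : coroot (0 : vec) = 0.
Proof. by rewrite /coroot scaler0. Qed.

Lemma corootK : involutive (@coroot R n).
Proof.
move=> a; have [->|a0] := eqVneq a 0; first by rewrite !coroot0.
have := dotvv_neq0 a0; rewrite /coroot dotZl dotZr scalerA => aa0.
by rewrite -[RHS]scale1r; congr (_ *: _); field.
Qed.

Lemma corootN a : coroot (- a) = - coroot a.
Proof. by rewrite /coroot dotNl dotNr opprK scalerN. Qed.

Lemma coroot_eq0 a : (coroot a == 0) = (a == 0).
Proof.
apply/eqP/eqP => [a0|->]; last exact: coroot0.
by rewrite -(corootK a) a0 coroot0.
Qed.

Lemma corootZ c a : c != 0 -> coroot (c *: a) = c^-1 *: coroot a.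
Proof.
move=> c0; have [->|a0] := eqVneq a 0; first by rewrite scaler0 coroot0 scaler0.
have := dotvv_neq0 a0; rewrite /coroot dotZl dotZr !scalerA => aa0.
by congr (_ *: _); field; apply/andP.
Qed.

Lemma reflmxN a : reflmx (- a) = reflmx a.
Proof. by rewrite /reflmx corootN linearN /= mulNmx mulmxN opprK. Qed.

Lemma reflmx_self a : a != 0 -> reflmx a *m a = - a.
Proof. by move=> a0; rewrite reflmxE dot_coroot // scaler_nat mulr2n opprD addNKr. Qed.

Lemma reflmxK a x : reflmx a *m (reflmx a *m x) = x.
Proof.
have [->|a0] := eqVneq a 0; first by rewrite !reflmxE coroot0 !dot0r !scale0r !subr0.
rewrite [reflmx a *m x]reflmxE mulmxBr -scalemxAr reflmx_self // scalerN opprK.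
by rewrite reflmxE subrK.
Qed.

Lemma reflmx_invol a : reflmx a *m reflmx a = 1%:M.
Proof. by apply: mulmx_colI => x; rewrite -mulmxA reflmxK mul1mx. Qed.

Definition dot_preserving A := forall u v, dot (A *m u) (A *m v) = dot u v.

Lemma dot_preserving1 : dot_preserving 1%:M.
Proof. by move=> u v; rewrite !mul1mx. Qed.

Lemma dot_preservingM A B :
  dot_preserving A -> dot_preserving B -> dot_preserving (A *m B).
Proof. by move=> pA pB u v; rewrite -!mulmxA pA pB. Qed.

Lemma dot_preserving_reflmx a : dot_preserving (reflmx a).
Proof.
move=> u v; have [->|a0] := eqVneq a 0.
  by rewrite !reflmxE coroot0 !dot0r !scale0r !subr0.
have aa0 := dotvv_neq0 a0.
by rewrite !reflmxE !(dotBl, dotBr, dotZl, dotZr) /coroot ?(dotZl, dotZr) (dotC a v); field.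
Qed.

Lemma dot_preserving_coroot A a :
  dot_preserving A -> A *m coroot a = coroot (A *m a).
Proof. by move=> pA; rewrite /coroot pA scalemxAr. Qed.

Lemma exists_dual_vector (v : 'I_n -> vec) :
  (forall c : 'I_n -> R, \sum_i c i *: v i = 0 -> forall i, c i = 0) ->
  forall t : 'I_n -> R, exists p, forall i, dot p (v i) = t i.
Proof.
move=> free t; pose B : mat := \matrix_(i, k) v i k 0.
have B_unit : B \in unitmx.
  rewrite unitmxE unitfE; apply/negP => /det0P [c c0 cB]; move/negP: c0; apply.
  have cv0 : \sum_i c 0 i *: v i = 0.
    apply/matrixP => k l; rewrite ord1.
    transitivity ((c *m B) 0 k); last by rewrite cB !mxE.
    by rewrite summxE !mxE; apply: eq_bigr => i _; rewrite !mxE.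
  by apply/eqP/matrixP => i k; rewrite ord1 mxE; apply: free cv0 k.
exists (invmx B *m \col_i t i) => i.
have : (B *m (invmx B *m \col_i t i)) i 0 = t i.
  by rewrite mulmxA mulmxV // mul1mx mxE.
by rewrite mxE dotE => <-; apply: eq_bigr => k _; rewrite [B _ _]mxE mulrC.
Qed.

Definition aff1 : mat * vec := (1%:M, 0).

Lemma aff_actM g h x : aff_act (aff_mul g h) x = aff_act g (aff_act h x).
Proof. by rewrite /aff_act /aff_mul /= mulmxDr mulmxA addrA. Qed.

Lemma aff_act1 x : aff_act aff1 x = x.
Proof. by rewrite /aff_act /= mul1mx addr0. Qed.

Lemma aff_ext g h : (forall x, aff_act g x = aff_act h x) -> g = h.
Proof.
case: g h => [A u] [B v] /= gh.
have uv : u = v by have := gh 0; rewrite /aff_act /= !mulmx0 !add0r.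
subst v; congr pair; apply: mulmx_colI => x.
by have := gh x; rewrite /aff_act /= => /addIr.
Qed.

Lemma aff_mulA g h k : aff_mul (aff_mul g h) k = aff_mul g (aff_mul h k).
Proof. by apply: aff_ext => x; rewrite !aff_actM. Qed.
Lemma aff_mul1g g : aff_mul aff1 g = g.
Proof. by apply: aff_ext => x; rewrite !aff_actM aff_act1. Qed.
Lemma aff_mulg1 g : aff_mul g aff1 = g.
Proof. by apply: aff_ext => x; rewrite !aff_actM aff_act1. Qed.

(* An affine functional f = (v, k) stands for x |-> <x, v> + k; afun_act g f
   is f \o g^-1 when g.1 is orthogonal, and afun_refl f is the orthogonal
   reflection in the zero set of f. *)
Definition aff_eval f x : R := dot x f.1 + f.2.
Definition afun_act g f : afun := (g.1 *m f.1, f.2 - dot g.2 (g.1 *m f.1)).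
Definition afun_refl f : mat * vec := (reflmx (coroot f.1), - f.2 *: coroot f.1).

Lemma aff_evalN f x : aff_eval (- f) x = - aff_eval f x.
Proof. by rewrite /aff_eval /= dotNr opprD. Qed.

Lemma aff_eval_sum (I : finType) (c : I -> R) (F : I -> afun) x :
  aff_eval (\sum_i c i *: F i) x = \sum_i c i * aff_eval (F i) x.
Proof.
rewrite /aff_eval (linear_sum fst) (linear_sum snd) /= dot_sumr -big_split /=.
by apply: eq_bigr => i _; rewrite dotZr mulrDr.
Qed.

Lemma afun_reflE f x : aff_act (afun_refl f) x = x - aff_eval f x *: coroot f.1.
Proof.
by rewrite /aff_act /afun_refl /= reflmxE corootK /aff_eval scalerDl opprD addrA scaleNr.
Qed.

Lemma afun_act_refl e f : e.1 != 0 ->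
  afun_act (afun_refl e) f = f - dot f.1 (coroot e.1) *: e.
Proof.
move=> e0; have ee0 := dotvv_neq0 e0.
rewrite /afun_act /afun_refl /= reflmxE corootK; congr pair.
  by rewrite /coroot dotZr scalerA [_ * _]mulrC.
rewrite /= regular_scaleE dotZl dotBr dotZr /coroot !dotZl !dotZr (dotC e.1 f.1).
by field.
Qed.

Lemma aff_eval_act g f x :
  dot_preserving g.1 -> aff_eval (afun_act g f) (aff_act g x) = aff_eval f x.
Proof. by move=> pg; rewrite /aff_eval /afun_act /aff_act /= dotDl pg; ring. Qed.

Lemma afun_actM g h f : dot_preserving g.1 ->
  afun_act (aff_mul g h) f = afun_act g (afun_act h f).
Proof.
move=> pg; rewrite /afun_act /aff_mul /= -!mulmxA; congr pair.
by rewrite dotDl pg; ring.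
Qed.

Lemma afun_act1 f : afun_act aff1 f = f.
Proof. by case: f => v k; rewrite /afun_act /= mul1mx dot0l subr0. Qed.

Lemma afun_actN g f : afun_act g (- f) = - afun_act g f.
Proof. by rewrite /afun_act /= mulmxN dotNr opprK; congr pair; rewrite opprB addrC. Qed.

Lemma afun_reflN f : afun_refl (- f) = afun_refl f.
Proof. by rewrite /afun_refl /= corootN reflmxN opprK scalerN scaleNr. Qed.

Lemma afun_refl_invol f : aff_mul (afun_refl f) (afun_refl f) = aff1.
Proof.
apply: aff_ext => x; rewrite !aff_actM !afun_reflE aff_act1.
have [->|f0] := eqVneq f.1 0; first by rewrite coroot0 !scaler0 !subr0.
suff -> : aff_eval f (x - aff_eval f x *: coroot f.1) = - aff_eval f x.
  by rewrite scaleNr opprK subrK.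
by rewrite /aff_eval dotBl dotZl (dotC (coroot _)) dot_coroot //; ring.
Qed.

Lemma afun_refl_conj g f : dot_preserving g.1 ->
  aff_mul g (afun_refl f) = aff_mul (afun_refl (afun_act g f)) g.
Proof.
move=> pg; apply: aff_ext => x.
rewrite !aff_actM !afun_reflE aff_eval_act // /aff_act /afun_act /= mulmxBr.
by rewrite -dot_preserving_coroot // -scalemxAr addrAC.
Qed.

(* The reflection in the wall of f moves x away from p exactly when x and p
   lie on the same side of the wall. *)
Lemma afun_refl_dist f x p : f.1 != 0 ->
  dot (aff_act (afun_refl f) x - p) (aff_act (afun_refl f) x - p) =
  dot (x - p) (x - p) + 4 / dot f.1 f.1 * aff_eval f x * aff_eval f p.
Proof.
move=> f0; have ff0 := dotvv_neq0 f0; rewrite afun_reflE /aff_eval.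
rewrite addrAC !(dotBl, dotBr, dotZl, dotZr) /coroot ?(dotZl, dotZr, dotBl).
by rewrite (dotC f.1 x) (dotC f.1 p) (dotC p x); field.
Qed.

Lemma aff_act_scale g c x : c != 0 ->
  aff_act g (c^-1 *: x) = c^-1 *: (g.1 *m x + c *: g.2).
Proof. by move=> c0; rewrite /aff_act scalerDr scalerA mulVf // scale1r scalemxAr. Qed.

End Euclidean.

(** * Root systems, the Weyl group and the lattices Q and P *)

Section RootSystem.
Variables (R : realType) (n : nat) (Phi : seq 'cV[R]_n) (alpha : 'I_n -> 'cV[R]_n).
Hypotheses (irrPhi : is_irred_root_system Phi) (baseP : is_base Phi alpha).
Notation vec := 'cV[R]_n.
Notation mat := 'M[R]_n.
Implicit Types (a b x y q lam : vec) (w : mat).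

Lemma root_neq0 a : a \in Phi -> a != 0.
Proof. by case: irrPhi => [[_ Phi0]] _ _ _ _ aPhi; apply: contraNneq Phi0 => <-. Qed.

Lemma root_coroot_int a b : a \in Phi -> b \in Phi -> dot b (coroot a) \is a Num.int.
Proof. by case: irrPhi => _ _ int_Phi _ _; apply: int_Phi. Qed.

Lemma reflmx_root a b : a \in Phi -> b \in Phi -> reflmx a *m b \in Phi.
Proof. by case: irrPhi => _ refl_Phi _ _ _; apply: refl_Phi. Qed.

Lemma rootN a : a \in Phi -> - a \in Phi.
Proof. by move=> aPhi; rewrite -reflmx_self ?root_neq0 // reflmx_root. Qed.

Lemma root_reduced a c : a \in Phi -> c *: a \in Phi -> c = 1 \/ c = -1.
Proof. by case: irrPhi => _ _ _ red_Phi _; apply: red_Phi. Qed.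

Lemma simple_root i : alpha i \in Phi.
Proof. by case: baseP. Qed.

Lemma simple_root_neq0 i : alpha i != 0.
Proof. exact/root_neq0/simple_root. Qed.

Lemma dim_gt0 : (0 < n)%N.
Proof.
have [a aPhi] : exists a, a \in Phi.
  by case: irrPhi => [[]]; case: Phi => [//|a s] _ _ _ _ _ _; exists a; rewrite mem_head.
rewrite lt0n; apply: contraNneq (root_neq0 aPhi) => n0.
by apply/eqP/matrixP => i; have := ltn_ord i; rewrite {2}n0.
Qed.

Lemma weyl_dot_preserving w : inW Phi w -> dot_preserving w.
Proof.
elim=> [|a w' _ _ IH]; first exact: dot_preserving1.
exact: dot_preservingM (dot_preserving_reflmx a) IH.
Qed.

Lemma weyl_root w a : inW Phi w -> a \in Phi -> w *m a \in Phi.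
Proof.
move=> Ww; elim: Ww a => [a|b w' bPhi _ IH a aPhi]; first by rewrite mul1mx.
by rewrite -mulmxA reflmx_root // IH.
Qed.

Lemma weylM w1 w2 : inW Phi w1 -> inW Phi w2 -> inW Phi (w1 *m w2).
Proof.
move=> W1 W2; elim: W1 => [|a w a_Phi _ IH]; first by rewrite mul1mx.
by rewrite -mulmxA; apply: inWS.
Qed.

Lemma weyl_reflmx a : a \in Phi -> inW Phi (reflmx a).
Proof. by move=> aPhi; have := inWS aPhi (inW1 Phi); rewrite mulmx1. Qed.

Lemma weyl_inv w : inW Phi w -> exists2 w', inW Phi w' & w' *m w = 1%:M.
Proof.
elim=> [|a w1 aPhi _ [w' Ww' w'w1]]; first by exists 1%:M; [apply: inW1 | rewrite mul1mx].
exists (w' *m reflmx a); first by apply: weylM => //; apply: weyl_reflmx.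
by rewrite mulmxA -(mulmxA w') reflmx_invol mulmx1.
Qed.

Lemma inQ0 : inQ alpha 0.
Proof. by exists (fun=> 0); rewrite big1 // => i _; rewrite scale0r. Qed.

Lemma inQD x y : inQ alpha x -> inQ alpha y -> inQ alpha (x + y).
Proof.
move=> [k ->] [l ->]; exists (fun i => k i + l i); rewrite -big_split /=.
by apply: eq_bigr => i _; rewrite intrD scalerDl.
Qed.

Lemma inQZ c x : c \is a Num.int -> inQ alpha x -> inQ alpha (c *: x).
Proof.
move=> /intrP[z ->] [k ->]; exists (fun i => z * k i); rewrite scaler_sumr.
by apply: eq_bigr => i _; rewrite intrM scalerA.
Qed.

Lemma inQN x : inQ alpha x -> inQ alpha (- x).
Proof. by rewrite -scaleN1r; apply: inQZ; rewrite rpredN rpred1. Qed.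

Lemma inQB x y : inQ alpha x -> inQ alpha y -> inQ alpha (x - y).
Proof. by move=> Qx Qy; apply/inQD/inQN. Qed.

Lemma root_inQ a : a \in Phi -> inQ alpha a.
Proof. by case: baseP => _ _ base_Phi /base_Phi [k [-> _]]; exists k. Qed.

Lemma inQ_dot_coroot_int q b : inQ alpha q -> b \in Phi -> dot q (coroot b) \is a Num.int.
Proof.
move=> [k ->] bPhi; rewrite dot_suml; apply: rpred_sum => i _.
by rewrite dotZl rpredM ?intr_int ?root_coroot_int ?simple_root.
Qed.

Lemma weyl_inQ w q : inW Phi w -> inQ alpha q -> inQ alpha (w *m q).
Proof.
move=> Ww; elim: Ww q => [q|a w' aPhi _ IH q Qq]; first by rewrite mul1mx.
rewrite -mulmxA reflmxE; apply: inQB; first exact: IH.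
by apply: inQZ; [apply: inQ_dot_coroot_int => //; apply: IH | apply: root_inQ].
Qed.

Lemma inPD x y : inP alpha x -> inP alpha y -> inP alpha (x + y).
Proof. by move=> Px Py i; rewrite dotDl rpredD. Qed.

Lemma inPB x y : inP alpha x -> inP alpha y -> inP alpha (x - y).
Proof. by move=> Px Py i; rewrite dotBl rpredB. Qed.

Lemma inPZ c x : c \is a Num.int -> inP alpha x -> inP alpha (c *: x).
Proof. by move=> c_int Px i; rewrite dotZl rpredM. Qed.

Lemma inQ_inP q : inQ alpha q -> inP alpha q.
Proof. by move=> Qq i; apply/inQ_dot_coroot_int/simple_root. Qed.

Lemma simple_coroot_free (c : 'I_n -> R) :
  \sum_i c i *: coroot (alpha i) = 0 -> forall i, c i = 0.
Proof.
case: baseP => _ free _ c0 i.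
have := free (fun i => c i * (2 / dot (alpha i) (alpha i))).
rewrite (eq_bigr (fun i => c i *: coroot (alpha i))); last first.
  by move=> k _; rewrite /coroot scalerA.
move=> /(_ c0 i) /eqP; rewrite mulf_eq0 => /orP[/eqP //|].
by rewrite mulf_eq0 invr_eq0 dotvv_eq0 (negbTE (simple_root_neq0 i)) pnatr_eq0.
Qed.

Lemma simple_coroot_coefI (c c' : 'I_n -> R) :
  \sum_i c i *: coroot (alpha i) = \sum_i c' i *: coroot (alpha i) ->
  forall i, c i = c' i.
Proof.
move=> cc' i; apply/eqP; rewrite -subr_eq0; apply/eqP; move: i.
apply: simple_coroot_free; under eq_bigr do rewrite scalerBl.
by rewrite sumrB cc' subrr.
Qed.

Variable eta : vec.
Hypothesis etaP : is_highest_dual_root Phi alpha eta.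
Notation afun := ('cV[R]_n * R^o)%type.
Notation ac i := (coroot (alpha i)).
Implicit Types (f : afun).

Lemma highest_dual_root_coef : exists m : 'I_n -> nat, eta = \sum_i (m i)%:R *: ac i.
Proof.
pose j := Ordinal dim_gt0.
case: etaP => _ /(_ _ (simple_root j)) [k etaE].
exists (fun i => (k i + (i == j))%N).
under eq_bigr do rewrite natrD scalerDl.
by rewrite big_split /= -etaE sum_delta subrK.
Qed.

Variable m : 'I_n -> nat.
Hypothesis etaE : eta = \sum_i (m i)%:R *: ac i.

Lemma coroot_coef a : a \in Phi -> exists d : 'I_n -> R,
  [/\ coroot a = \sum_i d i *: ac i, (forall i, d i \is a Num.int),
      (forall i, d i <= (m i)%:R) & (forall i, 0 <= d i) \/ (forall i, d i <= 0)].
Proof.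
move=> aPhi; case: etaP => _ /(_ _ aPhi) [k kE].
pose d i := (m i)%:R - (k i)%:R : R.
have dE : coroot a = \sum_i d i *: ac i.
  under eq_bigr do rewrite scalerBl; by rewrite sumrB -etaE -kE opprB addrC subrK.
exists d; split => // [i|i|]; rewrite ?rpredB ?natr_int ?lerBlDr ?lerDl //.
case: baseP => _ _ /(_ _ aPhi) [z [zE z_sign]].
have aa0 := dotvv_gt0 (root_neq0 aPhi).
pose e i := 2 / dot a a * (z i)%:~R * (dot (alpha i) (alpha i) / 2).
have eE : coroot a = \sum_i e i *: ac i.
  transitivity ((2 / dot a a) *: \sum_i (z i)%:~R *: alpha i); first by rewrite -zE.
  rewrite scaler_sumr; apply: eq_bigr => i _.
  have ii0 := dotvv_neq0 (simple_root_neq0 i).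
  rewrite /coroot !scalerA; congr (_ *: _); rewrite /e; field.
  by rewrite ii0 lt0r_neq0.
have de := simple_coroot_coefI (etrans (esym dE) eE).
have ii_gt0 i : 0 < dot (alpha i) (alpha i) / 2.
  by rewrite divr_gt0 ?dotvv_gt0 ?simple_root_neq0.
have c_gt0 : 0 < 2 / dot a a by rewrite divr_gt0.
case: z_sign => z_sign; [left|right] => i; rewrite de /e.
  apply: mulr_ge0; last exact: ltW.
  by apply: mulr_ge0; [apply: ltW | rewrite ler0z z_sign].
rewrite mulrAC; apply: mulr_ge0_le0; last by rewrite lerz0 z_sign.
by apply: mulr_ge0; apply: ltW.
Qed.

Lemma inP_dot_coroot_int lam a :
  inP alpha lam -> a \in Phi -> dot lam (coroot a) \is a Num.int.
Proof.
move=> Plam aPhi; have [d [-> d_int _ _]] := coroot_coef aPhi.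
by rewrite dot_sumr; apply: rpred_sum => i _; rewrite dotZr rpredM.
Qed.

Lemma weyl_inP w lam : inW Phi w -> inP alpha lam -> inP alpha (w *m lam).
Proof.
move=> Ww; elim: Ww lam => [lam|a w' aPhi _ IH lam Plam]; first by rewrite mul1mx.
rewrite -mulmxA reflmxE; apply: inPB; first exact: IH.
apply: inPZ; first by apply: inP_dot_coroot_int => //; apply: IH.
exact/inQ_inP/root_inQ.
Qed.

(** * Affine roots and the affine Weyl group *)

(* The simple affine roots alpha_i^v and 1 - eta, whose zero sets are the
   walls of F^v. *)
Definition simple_aroot (j : option 'I_n) : afun :=
  if j is Some i then (ac i, 0) else (- eta, 1).

Definition is_aroot f := (exists2 a, a \in Phi & f.1 = coroot a) /\ f.2 \is a Num.int.

Definition in_simple_cone f := exists2 c : option 'I_n -> R,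
  (forall j, 0 <= c j) & f = \sum_j c j *: simple_aroot j.

Notation sa := simple_aroot.

Lemma simple_aroot_coroot j : exists2 a, a \in Phi & (sa j).1 = coroot a.
Proof.
case: j => [i|]; first by exists (alpha i); rewrite ?simple_root.
have [[a0 a0Phi eta_a0] _] := etaP.
by exists (- a0); rewrite ?rootN //= eta_a0 corootN.
Qed.

Lemma simple_aroot_is_aroot j : is_aroot (sa j).
Proof.
by split; [apply: simple_aroot_coroot | case: j => [i|]; rewrite /= ?rpred0 ?rpred1].
Qed.

Lemma aroot_neq0 f : is_aroot f -> f.1 != 0.
Proof. by case=> [[a aPhi ->] _]; rewrite coroot_eq0 root_neq0. Qed.

Lemma arootN f : is_aroot f -> is_aroot (- f).
Proof.
case=> [[a aPhi fE] f_int]; split; last by rewrite rpredN.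
by exists (- a); rewrite ?rootN //= fE corootN.
Qed.

Lemma sum_simple_aroot (c : option 'I_n -> R) : \sum_j c j *: sa j =
  (\sum_i c (Some i) *: ac i - c None *: eta, c None : R^o).
Proof.
rewrite [LHS]surjective_pairing (linear_sum fst) (linear_sum snd) /= !sum_option /=.
congr pair; first by rewrite scalerN addrC.
by rewrite regular_scaleE mulr1 big1 ?addr0 // => i _; rewrite regular_scaleE mulr0.
Qed.

Lemma simple_aroot_coefI (c c' : option 'I_n -> R) :
  \sum_j c j *: sa j = \sum_j c' j *: sa j -> forall j, c j = c' j.
Proof.
rewrite !sum_simple_aroot => /pair_equal_spec[cc'1 cc'0].
by case=> [i|//]; move: cc'1; rewrite cc'0 => /addIr /simple_coroot_coefI; apply.
Qed.

Lemma simple_cone_of_coef a k (d : 'I_n -> R) : coroot a = \sum_i d i *: ac i ->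
  (forall i, 0 <= d i <= (m i)%:R) -> k \is a Num.int ->
  in_simple_cone (coroot a, k) \/ in_simple_cone (- (coroot a, k)).
Proof.
move=> dE d_bd k_int; have m_ge0 i : 0 <= (m i)%:R :> R by rewrite ler0n.
have [k_ge0|k_lt0] := leP 0 k; [left|right].
  exists (fun j => if j is Some i then d i + k * (m i)%:R else k).
    by case=> // i; have /andP[] := d_bd i; nra.
  rewrite sum_simple_aroot; under eq_bigr do rewrite scalerDl -scalerA.
  by rewrite big_split /= -dE -scaler_sumr -etaE addrK.
have k_le : 1 <= - k.
  by move: k_int k_lt0 => /intrP[z ->]; rewrite ltrz0 -rmorphN /= ler1z; lia.
exists (fun j => if j is Some i then - d i - k * (m i)%:R else - k).
  by case=> [i|]; [have /andP[] := d_bd i; nra | lra].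
rewrite sum_simple_aroot; under eq_bigr do rewrite scalerBl -scalerA scaleNr.
rewrite sumrB sumrN -dE -scaler_sumr -etaE scaleNr opprK subrK.
by congr pair.
Qed.

Lemma aroot_pos_or_neg f : is_aroot f -> in_simple_cone f \/ in_simple_cone (- f).
Proof.
case: f => v k [[a aPhi /= ->] /= k_int].
have [d [dE _ d_le [d_ge0|d_le0]]] := coroot_coef aPhi.
  by apply: simple_cone_of_coef dE _ k_int => i; rewrite d_ge0 d_le.
have [d' [d'E _ d'_le _]] := coroot_coef (rootN aPhi).
have d'N i : d' i = - d i.
  apply: (simple_coroot_coefI (c' := fun i => - d i)).
  by rewrite -d'E corootN dE -sumrN; apply: eq_bigr => l _; rewrite scaleNr.
have d'_bd i : 0 <= d' i <= (m i)%:R by rewrite d'_le d'N oppr_ge0 d_le0.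
have Nk_int : - k \is a Num.int by rewrite rpredN.
have opp_pair : (coroot a, k) = - (- coroot a, - k : R^o) by congr pair; rewrite opprK.
by case: (simple_cone_of_coef d'E d'_bd Nk_int); rewrite corootN -?opp_pair; [right|left].
Qed.


Lemma simple_aroot_neq0 j : (sa j).1 != 0.
Proof. exact/aroot_neq0/simple_aroot_is_aroot. Qed.

Lemma aroot_not_pos_neg f : is_aroot f -> in_simple_cone f -> ~ in_simple_cone (- f).
Proof.
move=> f_aroot [c c_ge0 fE] [c' c'_ge0 f'E].
have cc' : forall j, c j = - c' j.
  apply: simple_aroot_coefI; under [RHS]eq_bigr do rewrite scaleNr.
  by rewrite sumrN -f'E opprK.
have c0 j : c j = 0 by apply/eqP; rewrite eq_le c_ge0 andbT cc' oppr_le0.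
case/eqP: (aroot_neq0 f_aroot); rewrite fE big1 // => j _.
by rewrite c0 scale0r.
Qed.

Lemma aroot_simple_multiple f j c : is_aroot f -> 0 <= c -> f.1 = c *: (sa j).1 -> c = 1.
Proof.
move=> [[a aPhi fE] _] c_ge0; have [b bPhi bE] := simple_aroot_coroot j.
rewrite fE bE => ab.
have c0 : c != 0.
  by apply: contraTneq (root_neq0 aPhi) => c0; rewrite negbK -coroot_eq0 ab c0 scale0r.
have : c^-1 *: b \in Phi by rewrite -[b]corootK -corootZ // -ab corootK.
case/(root_reduced bPhi) => [/eqP|cN1]; first by rewrite invr_eq1 => /eqP.
by move: c_ge0; rewrite -[c]invrK cN1 invrN1 oppr_ge0 ler10.
Qed.

Definition in_affW (g : mat * vec) := inW Phi g.1 /\ inQ alpha g.2.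

Lemma affW_dot_preserving g : in_affW g -> dot_preserving g.1.
Proof. by case=> /weyl_dot_preserving. Qed.

Lemma affW1 : in_affW (aff1 R n).
Proof. by split; [apply: inW1 | apply: inQ0]. Qed.

Lemma affWM g h : in_affW g -> in_affW h -> in_affW (aff_mul g h).
Proof.
by move=> [Wg Qg] [Wh Qh]; split; [apply: weylM | apply/inQD/Qg/weyl_inQ].
Qed.

Lemma affW_refl f : is_aroot f -> in_affW (afun_refl f).
Proof.
case=> [[a aPhi fE] k_int]; rewrite /afun_refl /= fE corootK.
by split; [apply: weyl_reflmx | apply: inQZ (root_inQ aPhi); rewrite rpredN].
Qed.

Lemma affW_aroot g f : in_affW g -> is_aroot f -> is_aroot (afun_act g f).
Proof.
move=> [Wg Qg] [[a aPhi fE] f_int]; have pg := weyl_dot_preserving Wg.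
split; first by exists (g.1 *m a); rewrite ?weyl_root //= fE dot_preserving_coroot.
by rewrite /= rpredB // fE dot_preserving_coroot // inQ_dot_coroot_int ?weyl_root.
Qed.

Definition simple_refl j := afun_refl (sa j).

Lemma affW_simple_refl j : in_affW (simple_refl j).
Proof. exact/affW_refl/simple_aroot_is_aroot. Qed.

Lemma simple_refl_dot_preserving j : dot_preserving (simple_refl j).1.
Proof. exact/affW_dot_preserving/affW_simple_refl. Qed.

Lemma simple_reflE j f :
  afun_act (simple_refl j) f = f - dot f.1 (coroot (sa j).1) *: sa j.
Proof. exact/afun_act_refl/simple_aroot_neq0. Qed.

Lemma simple_refl_self j : afun_act (simple_refl j) (sa j) = - sa j.
Proof.
by rewrite simple_reflE dot_coroot ?simple_aroot_neq0 // scaler_nat mulr2n opprD addNKr.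
Qed.

Lemma simple_refl_invol j f : afun_act (simple_refl j) (afun_act (simple_refl j) f) = f.
Proof.
rewrite -afun_actM; last exact: simple_refl_dot_preserving.
by rewrite /simple_refl afun_refl_invol afun_act1.
Qed.

Lemma simple_refl_cone f j : is_aroot f -> in_simple_cone f -> f != sa j ->
  in_simple_cone (afun_act (simple_refl j) f).
Proof.
move=> f_aroot [c c_ge0 fE] fj.
have sf_aroot := affW_aroot (affW_simple_refl j) f_aroot.
case: (aroot_pos_or_neg sf_aroot) => // -[c' c'_ge0]; rewrite simple_reflE.
set mu := dot _ _ => sfE; exfalso.
have cc' : forall k, c k + c' k = mu * (k == j)%:R.
  apply: simple_aroot_coefI; under eq_bigr do rewrite scalerDl.
  under [RHS]eq_bigr do rewrite -scalerA.
  by rewrite big_split /= -fE -sfE -scaler_sumr sum_delta opprB addrC subrK.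
have c_j k : k != j -> c k = 0.
  move=> /negbTE kj; have := cc' k; rewrite kj mulr0 => /eqP.
  by rewrite paddr_eq0 // => /andP[/eqP].
have f_j : f = c j *: sa j.
  by rewrite fE (bigD1 j) //= big1 ?addr0 // => k /c_j ->; rewrite scale0r.
have cj1 := aroot_simple_multiple f_aroot (c_ge0 j) (congr1 fst f_j).
by move: fj; rewrite f_j cj1 scale1r eqxx.
Qed.

Definition word (ts : seq (option 'I_n)) : mat * vec :=
  foldr (fun t g => aff_mul (simple_refl t) g) (aff1 R n) ts.

Lemma word_cat s1 s2 : word (s1 ++ s2) = aff_mul (word s1) (word s2).
Proof. by elim: s1 => [|t s IH] /=; rewrite ?aff_mul1g // IH aff_mulA. Qed.

Lemma word_rcons s j : word (rcons s j) = aff_mul (word s) (simple_refl j).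
Proof. by rewrite -cats1 word_cat /= aff_mulg1. Qed.

Lemma affW_word ts : in_affW (word ts).
Proof. by elim: ts => [|t ts IH]; [apply: affW1 | apply/affWM/IH/affW_simple_refl]. Qed.

Lemma word_dot_preserving ts : dot_preserving (word ts).1.
Proof. exact/affW_dot_preserving/affW_word. Qed.

(* If a word turns a positive affine root f negative, some letter t of the
   word, read right to left, is the first one to do so, and then it sends
   the image of f so far to -sa t. *)
Lemma word_sign_change ts f : is_aroot f -> in_simple_cone f ->
  in_simple_cone (- afun_act (word ts) f) ->
  exists ts1 t ts2, ts = ts1 ++ t :: ts2 /\ afun_act (word ts2) f = sa t.
Proof.
move=> f_aroot f_pos; elim: ts => [|t ts IH] /=.
  by rewrite afun_act1 => /(aroot_not_pos_neg f_aroot f_pos).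
rewrite (afun_actM _ _ (simple_refl_dot_preserving t)).
have tsf_aroot := affW_aroot (affW_word ts) f_aroot.
case: (aroot_pos_or_neg tsf_aroot) => [tsf_pos|tsf_neg] ttsf_neg.
  exists [::], t, ts; split => //; apply/eqP/negPn/negP => tsf_t.
  exact: aroot_not_pos_neg (affW_aroot (affW_simple_refl t) tsf_aroot)
    (simple_refl_cone tsf_aroot tsf_pos tsf_t) ttsf_neg.
by have [ts1 [t' [ts2 [-> E]]]] := IH tsf_neg; exists (t :: ts1), t', ts2.
Qed.

Lemma cone_simple_aroot j : in_simple_cone (sa j).
Proof.
exists (fun k => (k == j)%:R); first by move=> k; rewrite ler0n.
by rewrite sum_delta.
Qed.

(** * F^v is a fundamental domain *)

Definition in_alcove x := forall j, 0 <= aff_eval (sa j) x.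

Lemma cone_eval_ge0 f x : in_simple_cone f -> in_alcove x -> 0 <= aff_eval f x.
Proof.
move=> [c c_ge0 ->] x_alc; rewrite aff_eval_sum.
by apply: sumr_ge0 => j _; rewrite mulr_ge0.
Qed.

(* Induction on the length of the word: either the last letter s_j fixes x
   (the word maps sa j to a negative root, which forces aff_eval (sa j) x = 0),
   or the word is not reduced and word_sign_change deletes two letters. *)
Lemma alcove_word_fixed N ts x : (size ts <= N)%N -> in_alcove x ->
  in_alcove (aff_act (word ts) x) -> aff_act (word ts) x = x.
Proof.
elim: N ts x => [|N IH] ts x.
  by rewrite leqn0 size_eq0 => /eqP -> _ _; rewrite aff_act1.
case/lastP: ts => [|u j]; first by rewrite aff_act1.
rewrite size_rcons ltnS => u_size x_alc gx_alc.
have gj_aroot := affW_aroot (affW_word (rcons u j)) (simple_aroot_is_aroot j).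
case: (aroot_pos_or_neg gj_aroot) => gj_pos.
  have uj_neg : in_simple_cone (- afun_act (word u) (sa j)).
    move: gj_pos; rewrite word_rcons (afun_actM _ _ (word_dot_preserving u)).
    by rewrite simple_refl_self afun_actN.
  have [u1 [t [u2 [uE u2j]]]] := word_sign_change (simple_aroot_is_aroot j)
    (cone_simple_aroot j) uj_neg.
  have shorter : word (rcons u j) = word (u1 ++ u2).
    rewrite uE word_rcons !word_cat /= !aff_mulA.
    rewrite (afun_refl_conj _ (word_dot_preserving u2)).
    by rewrite u2j -(aff_mulA (simple_refl t)) afun_refl_invol aff_mul1g.
  rewrite shorter IH // -?shorter //.
  by move: u_size; rewrite uE !size_cat /=; lia.
have xj0 : aff_eval (sa j) x = 0.
  apply/eqP; rewrite eq_le x_alc andbT.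
  have := cone_eval_ge0 gj_pos gx_alc.
  by rewrite aff_evalN aff_eval_act ?oppr_ge0 //; apply: word_dot_preserving.
have sjx : aff_act (simple_refl j) x = x by rewrite afun_reflE xj0 scale0r subr0.
have ux : aff_act (word (rcons u j)) x = aff_act (word u) x.
  by rewrite word_rcons aff_actM sjx.
by rewrite ux IH // -ux.
Qed.

Lemma aroot_simple_coroot_int f j : is_aroot f -> dot f.1 (coroot (sa j).1) \is a Num.int.
Proof.
case=> [[a aPhi ->] _]; have [b bPhi ->] := simple_aroot_coroot j.
by rewrite corootK dotC root_coroot_int.
Qed.

(* Descent on the height \sum_j c j: a simple reflection s_j with
   <f, sa j> > 0 lowers it by the positive integer <f, (sa j)^v>. *)
Lemma cone_aroot_conj_simple N f (c : option 'I_n -> R) : is_aroot f ->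
  (forall j, 0 <= c j) -> f = \sum_j c j *: sa j -> \sum_j c j <= N%:R ->
  exists ts j, f = afun_act (word ts) (sa j).
Proof.
elim: N f c => [|N IH] f c f_aroot c_ge0 fE c_le.
  have c0 j : c j = 0.
    apply/eqP; rewrite eq_le c_ge0 andbT; apply: le_trans c_le.
    by rewrite (bigD1 j) //= lerDl sumr_ge0.
  case/eqP: (aroot_neq0 f_aroot); rewrite fE big1 // => j _.
  by rewrite c0 scale0r.
have f1E : f.1 = \sum_j c j *: (sa j).1 by rewrite fE (linear_sum fst).
have [j cj_gt0] : exists j, 0 < c j * dot f.1 (sa j).1.
  have [j|none] := pickP (fun j => 0 < c j * dot f.1 (sa j).1); first by exists j.
  suff : 0 < dot f.1 f.1.
    by rewrite {2}f1E dot_sumr ltNge sumr_le0 // => k _; rewrite dotZr leNgt none.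
  exact: dotvv_gt0 (aroot_neq0 f_aroot).
have [-> | fj] := eqVneq f (sa j); first by exists [::], j; rewrite afun_act1.
pose mu := dot f.1 (coroot (sa j).1).
have mu_ge1 : 1 <= mu.
  have fj_gt0 : 0 < dot f.1 (sa j).1.
    apply: contraTT cj_gt0; rewrite -!leNgt; exact: mulr_ge0_le0.
  have : 0 < mu.
    by rewrite /mu /coroot dotZr mulr_gt0 ?divr_gt0 ?dotvv_gt0 ?simple_aroot_neq0.
  have := aroot_simple_coroot_int j f_aroot.
  by rewrite -/mu => /intrP[z ->]; rewrite ltr0z ler1z.
have [c' c'_ge0 sfE] := simple_refl_cone f_aroot (ex_intro2 _ _ c c_ge0 fE) fj.
have c'E : forall k, c' k = c k - mu * (k == j)%:R.
  apply: simple_aroot_coefI; under [RHS]eq_bigr do rewrite scalerBl -scalerA.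
  by rewrite sumrB -scaler_sumr sum_delta -fE -sfE simple_reflE.
have c'_le : \sum_k c' k <= N%:R.
  rewrite (eq_bigr _ (fun k _ => c'E k)) sumrB [X in _ - X](bigD1 j) //= eqxx mulr1.
  rewrite [X in _ - (_ + X)]big1 ?addr0 => [|k /negbTE ->]; last by rewrite mulr0.
  by rewrite lerBlDr; apply: le_trans c_le _; rewrite -natr1 lerD2l.
have [ts [t sfE']] := IH _ c' (affW_aroot (affW_simple_refl j) f_aroot) c'_ge0 sfE c'_le.
exists (j :: ts), t; rewrite /= (afun_actM _ _ (simple_refl_dot_preserving j)).
by rewrite -sfE' simple_refl_invol.
Qed.

Lemma aroot_conj_simple f : is_aroot f ->
  exists ts j, f = afun_act (word ts) (sa j) \/ - f = afun_act (word ts) (sa j).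
Proof.
move=> f_aroot; have height_bd (c : option 'I_n -> R) : (forall j, 0 <= c j) ->
    \sum_j c j <= (Num.Def.archi_bound (\sum_j c j))%:R.
  by move=> c_ge0; apply/ltW/archi_boundP/sumr_ge0.
have [[c c_ge0 fE]|[c c_ge0 fE]] := aroot_pos_or_neg f_aroot.
  have [ts [j ->]] := cone_aroot_conj_simple f_aroot c_ge0 fE (height_bd c c_ge0).
  by exists ts, j; left.
have [ts [j Nf]] := cone_aroot_conj_simple (arootN f_aroot) c_ge0 fE (height_bd c c_ge0).
by exists ts, j; right.
Qed.

Definition is_word g := exists ts, g = word ts.

Lemma is_wordM g h : is_word g -> is_word h -> is_word (aff_mul g h).
Proof. by move=> [s1 ->] [s2 ->]; exists (s1 ++ s2); rewrite word_cat. Qed.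

Lemma word_rev ts : word (ts ++ rev ts) = aff1 R n.
Proof.
elim: ts => [|t ts IH] //=; rewrite rev_cons -rcons_cat word_rcons IH aff_mul1g.
exact: afun_refl_invol.
Qed.

(* The reflection in a conjugate w(sa j) of a simple affine root is
   w s_j w^-1, and w^-1 is the reversed word. *)
Lemma aroot_refl_word f : is_aroot f -> is_word (afun_refl f).
Proof.
move=> f_aroot; have [ts [j fE]] := aroot_conj_simple f_aroot.
suff : is_word (afun_refl (afun_act (word ts) (sa j))).
  by case: fE => <- //; rewrite afun_reflN.
exists (ts ++ j :: rev ts); rewrite word_cat /= -aff_mulA.
rewrite (afun_refl_conj _ (word_dot_preserving ts)) aff_mulA -word_cat.
by rewrite word_rev aff_mulg1.
Qed.

Lemma weyl_word w : inW Phi w -> is_word (w, 0).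
Proof.
elim=> [|a w' aPhi _ IH]; first by exists [::].
have a_aroot : is_aroot (coroot a, 0 : R^o) by split; [exists a | rewrite rpred0].
have := is_wordM (aroot_refl_word a_aroot) IH.
by rewrite /afun_refl /aff_mul /= corootK oppr0 scale0r mulmx0 addr0.
Qed.

Lemma is_word_translD u v :
  is_word (1%:M, u) -> is_word (1%:M, v) -> is_word (1%:M, u + v).
Proof. by move=> /is_wordM wu /wu; rewrite /aff_mul /= !mul1mx addrC. Qed.

(* The translation by alpha_i is the product of the reflections in the two
   parallel walls alpha_i^v = 0 and alpha_i^v = 1. *)
Lemma is_word_simple_transl i :
  is_word (1%:M, alpha i) /\ is_word (1%:M, - alpha i).
Proof.
have aroot_k (k : R) : k \is a Num.int -> is_aroot (ac i, k : R^o).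
  by split => //; exists (alpha i); rewrite ?simple_root.
have w1 : is_word (afun_refl (ac i, -1 : R^o)).
  by apply/aroot_refl_word/aroot_k; rewrite rpredN rpred1.
have w0 : is_word (afun_refl (ac i, 0 : R^o)) by apply/aroot_refl_word/aroot_k/rpred0.
split; [move: (is_wordM w1 w0) | move: (is_wordM w0 w1)];
  rewrite /afun_refl /aff_mul /= corootK reflmx_invol oppr0 scale0r opprK scale1r.
  by rewrite mulmx0 add0r.
by rewrite addr0 reflmx_self ?simple_root_neq0.
Qed.

Lemma inQ_word q : inQ alpha q -> is_word (1%:M, q).
Proof.
have nat_mult i k : is_word (1%:M, alpha i *+ k) /\ is_word (1%:M, - (alpha i *+ k)).
  elim: k => [|k [IH IHN]]; first by rewrite mulr0n oppr0; split; exists [::].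
  have [wa wNa] := is_word_simple_transl i.
  by rewrite mulrS opprD; split; apply: is_word_translD.
move=> [k ->]; elim/big_rec: _ => [|i x _ wx]; first by exists [::].
apply: is_word_translD wx; rewrite scaler_int.
case: (k i) => l; first exact: (nat_mult i l).1.
by rewrite NegzE mulrNz; apply: (nat_mult i l.+1).2.
Qed.

Lemma affW_is_word g : in_affW g -> is_word g.
Proof.
case: g => w q [/= Ww Qq]; have := is_wordM (inQ_word Qq) (weyl_word Ww).
by rewrite /aff_mul /= mul1mx mulmx0 add0r.
Qed.

Lemma alcove_affW_fixed g x : in_affW g -> in_alcove x ->
  in_alcove (aff_act g x) -> aff_act g x = x.
Proof. by move=> /affW_is_word[ts ->]; apply: alcove_word_fixed (leqnn _). Qed.

Lemma alcove_interior_point : exists p t, 0 < t /\ forall j, aff_eval (sa j) p = t.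
Proof.
pose t : R := (1 + \sum_i (m i)%:R)^-1.
have m_ge0 : 0 <= \sum_i (m i)%:R :> R by apply: sumr_ge0 => i _; rewrite ler0n.
have [p pE] := exists_dual_vector simple_coroot_free (fun=> t).
exists p, t; split; first by rewrite invr_gt0 ltr_pwDl.
case=> [i|]; first by rewrite /aff_eval /= addr0 pE.
rewrite /aff_eval /= dotNr etaE dot_sumr.
under eq_bigr do rewrite dotZr pE mulrC.
by rewrite -mulr_sumr /t; field; rewrite lt0r_neq0 // ltr_pwDl.
Qed.

Lemma affW_inP g lam c : in_affW g -> inP alpha lam -> c \is a Num.int ->
  inP alpha (g.1 *m lam + c *: g.2).
Proof.
move=> [Wg Qg] Plam c_int; apply: inPD; first exact: weyl_inP.
exact/inQ_inP/inQZ.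
Qed.

Section Descent.
Variables (M : nat) (p : vec) (t : R).
Hypotheses (M_gt0 : (0 < M)%N) (t_gt0 : 0 < t) (pE : forall j, aff_eval (sa j) p = t).

Let M_neq0 : M%:R != 0 :> R. Proof. by rewrite pnatr_eq0 -lt0n. Qed.
Let dist x := dot (x - p) (x - p).
Let S := \sum_j dot (sa j).1 (sa j).1.
Let delta := 4 * t / (M%:R * S).

Let S_ge j : dot (sa j).1 (sa j).1 <= S.
Proof. by rewrite /S (bigD1 j) //= lerDl sumr_ge0 // => k _; apply: dotvv_ge0. Qed.

Let delta_gt0 : 0 < delta.
Proof.
have S_gt0 : 0 < S := lt_le_trans (dotvv_gt0 (simple_aroot_neq0 None)) (S_ge None).
by rewrite divr_gt0 ?mulr_gt0 ?ltr0n.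
Qed.

(* On the lattice P/M the values of affine roots lie in (1/M)Z. *)
Lemma simple_aroot_eval_le lam j : inP alpha lam ->
  aff_eval (sa j) (M%:R^-1 *: lam) < 0 -> aff_eval (sa j) (M%:R^-1 *: lam) <= - M%:R^-1.
Proof.
have M_gt0' : 0 < M%:R :> R by rewrite ltr0n.
move=> Plam; set e := aff_eval _ _ => e_lt0.
have Me_int : M%:R * e \is a Num.int.
  rewrite /e /aff_eval dotZl mulrDr mulrA mulfV // mul1r.
  have [[b bPhi ->] sj_int] := simple_aroot_is_aroot j.
  by rewrite rpredD ?rpredM ?natr_int ?inP_dot_coroot_int.
have Me_lt0 : M%:R * e < 0 by rewrite pmulr_rlt0.
rewrite -(ler_pM2l M_gt0') mulrN mulfV //.
move: Me_int Me_lt0 => /intrP[z ->]; rewrite ltrz0 => z_lt0.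
by rewrite -lerN2 opprK -rmorphN /= ler1z; lia.
Qed.

Lemma dist_simple_refl_le lam j : inP alpha lam ->
  aff_eval (sa j) (M%:R^-1 *: lam) < 0 ->
  dist (aff_act (simple_refl j) (M%:R^-1 *: lam)) <= dist (M%:R^-1 *: lam) - delta.
Proof.
move=> Plam e_lt0; have e_le := simple_aroot_eval_le Plam e_lt0.
rewrite /dist afun_refl_dist ?simple_aroot_neq0 // pE lerD2l /delta.
set e := aff_eval _ _ in e_lt0 e_le *; set B := dot (sa j).1 (sa j).1.
have B_gt0 : 0 < B by apply/dotvv_gt0/simple_aroot_neq0.
have Mi_gt0 : 0 < M%:R^-1 :> R by rewrite invr_gt0 ltr0n.
have eB : e / B <= - (M%:R^-1 / S).
  apply: le_trans (ler_wpM2r _ e_le) _; first by rewrite invr_ge0 ltW.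
  rewrite mulNr lerN2 ler_pM2l // lef_pV2 ?posrE ?S_ge //.
  exact: lt_le_trans B_gt0 (S_ge j).
have -> : 4 / B * e * t = 4 * t * (e / B) by ring.
by rewrite invfM -mulrN ler_pM2l ?mulr_gt0.
Qed.

Lemma alcove_affW_rep_bounded N lam : inP alpha lam ->
  dist (M%:R^-1 *: lam) < N%:R * delta ->
  exists2 g, in_affW g & in_alcove (aff_act g (M%:R^-1 *: lam)).
Proof.
elim: N lam => [|N IH] lam Plam dist_lt.
  by move: dist_lt; rewrite mul0r ltNge dotvv_ge0.
have [j e_lt0|alc] := pickP (fun j => aff_eval (sa j) (M%:R^-1 *: lam) < 0); last first.
  by exists (aff1 R n); [apply: affW1 | move=> j; rewrite aff_act1 leNgt alc].
set lam' := (simple_refl j).1 *m lam + M%:R *: (simple_refl j).2.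
have sjE : aff_act (simple_refl j) (M%:R^-1 *: lam) = M%:R^-1 *: lam'.
  exact: aff_act_scale.
have Plam' : inP alpha lam' := affW_inP (affW_simple_refl j) Plam (natr_int _ M).
have [g Wg alc] : exists2 g, in_affW g & in_alcove (aff_act g (M%:R^-1 *: lam')).
  apply: IH => //; have := dist_simple_refl_le Plam e_lt0.
  by rewrite sjE; move: dist_lt; rewrite -natr1 mulrDl mul1r; lra.
exists (aff_mul g (simple_refl j)); first exact/affWM/affW_simple_refl.
by rewrite aff_actM sjE.
Qed.

Lemma alcove_affW_rep lam : inP alpha lam ->
  exists2 g, in_affW g & in_alcove (aff_act g (M%:R^-1 *: lam)).
Proof.
move=> Plam; set N := Num.Def.archi_bound (dist (M%:R^-1 *: lam) / delta).
apply: (alcove_affW_rep_bounded (N := N)) => //.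
have := archi_boundP (divr_ge0 (dotvv_ge0 (M%:R^-1 *: lam - p)) (ltW delta_gt0)).
by rewrite ltr_pdivrMr.
Qed.

End Descent.

Lemma in_alcoveE x : in_alcove x <-> inFv alpha eta x.
Proof.
split=> [alc|[ge0 le1] [i|]]; rewrite /aff_eval /=.
- split=> [i|]; first by have := alc (Some i); rewrite /aff_eval /= addr0.
  by have := alc None; rewrite /aff_eval /= dotNr; lra.
- by rewrite addr0.
- by rewrite dotNr; lra.
Qed.

Lemma congMQ_refl M x : congMQ alpha M x x.
Proof. by exists 0; [apply: inQ0 | rewrite subrr scaler0]. Qed.

Lemma congMQ_sym M x y : congMQ alpha M x y -> congMQ alpha M y x.
Proof. by case=> q Qq xy; exists (- q); [apply: inQN | rewrite scalerN -xy opprB]. Qed.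

Lemma congMQ_trans M x y z :
  congMQ alpha M x y -> congMQ alpha M y z -> congMQ alpha M x z.
Proof.
case=> q Qq xy [q' Qq' yz]; exists (q + q'); first exact: inQD.
by rewrite scalerDr -xy -yz addrA subrK.
Qed.

Lemma weyl_congMQ M w x y :
  inW Phi w -> congMQ alpha M x y -> congMQ alpha M (w *m x) (w *m y).
Proof.
move=> Ww [q Qq xy]; exists (w *m q); first exact: weyl_inQ.
by rewrite -mulmxBr xy scalemxAr.
Qed.

Lemma lambda_orbit_rep M lam : (0 < M)%N -> inP alpha lam ->
  exists lam' w, [/\ inLambda alpha eta M lam', inW Phi w &
                     congMQ alpha M lam (w *m lam')].
Proof.
move=> M_gt0 Plam; have M_neq0 : M%:R != 0 :> R by rewrite pnatr_eq0 -lt0n.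
have [p [t [t_gt0 pE]]] := alcove_interior_point.
have [[w q] [/= Ww Qq]] := alcove_affW_rep M_gt0 t_gt0 pE Plam.
rewrite aff_act_scale //=; set lam' := w *m lam + M%:R *: q => alc.
have [w' Ww' w'w] := weyl_inv Ww.
exists lam', w'; split => //.
  split; first exact: (affW_inP (g := (w, q))) (natr_int _ M).
  exists lam'; last exact: congMQ_refl.
  by exists (M%:R^-1 *: lam'); [apply/in_alcoveE | rewrite scalerA divff ?scale1r].
exists (- (w' *m q)); first exact/inQN/weyl_inQ.
by rewrite /lam' mulmxDr mulmxA w'w mul1mx -scalemxAr scalerN opprD addNKr.
Qed.

(* Two points of Lambda_M in the same W-orbit have representatives a, a' in
   F^v with a' = g a for some g in the affine Weyl group, so a' = a. *)
Lemma lambda_orbit_uniq M lam lam' w : (0 < M)%N ->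
  inLambda alpha eta M lam -> inLambda alpha eta M lam' -> inW Phi w ->
  congMQ alpha M lam' (w *m lam) ->
  congMQ alpha M lam' lam /\ congMQ alpha M lam (w *m lam).
Proof.
move=> M_gt0 [_ [_ [a Fa ->] lam_a]] [_ [_ [a' Fa' ->] lam'_a']] Ww lam'_wlam.
have M_neq0 : M%:R != 0 :> R by rewrite pnatr_eq0 -lt0n.
have [q0 Qq0 q0E] : congMQ alpha M (w *m (M%:R *: a)) (M%:R *: a').
  apply: congMQ_trans (weyl_congMQ Ww (congMQ_sym lam_a)) _.
  exact: congMQ_trans (congMQ_sym lam'_wlam) lam'_a'.
have ga : aff_act (w, - q0) a = a'.
  apply: (scalerI M_neq0); rewrite /aff_act /= scalerDr scalemxAr scalerN -q0E.
  by rewrite opprB addrCA subrr addr0.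
have a'a : a' = a.
  rewrite -ga; apply: alcove_affW_fixed; rewrite ?ga; try exact/in_alcoveE.
  by split; [| apply: inQN].
have lam'_lam : congMQ alpha M lam' lam.
  by rewrite a'a in lam'_a'; apply: congMQ_trans lam'_a' (congMQ_sym lam_a).
by split => //; apply: congMQ_trans (congMQ_sym lam'_lam) lam'_wlam.
Qed.

End RootSystem.

Lemma stabv_affstab_iso (R : realType) n (Phi : seq 'cV[R]_n)
  (alpha : 'I_n -> 'cV[R]_n) (M : nat) (b : 'cV[R]_n) : (0 < M)%N ->
  exists f : 'M[R]_n -> 'M[R]_n * 'cV[R]_n,
    [/\ (forall w, inStabv Phi alpha M b w ->
                   inAffStab Phi alpha (M%:R^-1 *: b) (f w)),
        (forall w1 w2, inStabv Phi alpha M b w1 -> inStabv Phi alpha M b w2 ->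
                   f (w1 *m w2) = aff_mul (f w1) (f w2)),
        (forall w1 w2, inStabv Phi alpha M b w1 -> inStabv Phi alpha M b w2 ->
                   f w1 = f w2 -> w1 = w2) &
        (forall g, inAffStab Phi alpha (M%:R^-1 *: b) g ->
                   exists2 w, inStabv Phi alpha M b w & f w = g)].
Proof.
move=> M_gt0; have M_neq0 : M%:R != 0 :> R by rewrite pnatr_eq0 -lt0n.
exists (fun w => (w, M%:R^-1 *: (b - w *m b))); split.
- move=> w [Ww [q Qq qE]]; split => //=.
    by rewrite -opprB qE scalerN scalerA mulVf ?scale1r //; apply: inQN.
  by rewrite /aff_act /= -scalemxAr -scalerDr addrC subrK.
- move=> w1 w2 _ _; rewrite /aff_mul /=; congr pair.
  rewrite -scalemxAr mulmxBr -scalerDr mulmxA; congr (_ *: _).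
  by rewrite [RHS]addrC addrA subrK.
- by move=> w1 w2 _ _ [].
move=> [w q] [/= Ww Qq]; rewrite aff_act_scale //= => /(scalerI (invr_neq0 M_neq0)) qE.
exists w; last by rewrite -{1}qE addrC addKr scalerA mulVf ?scale1r.
split => //; exists (- q); first exact: inQN.
by rewrite -{2}qE opprD addNKr scalerN.
Qed.

Theorem proposition3p6 (R : realType) (n : nat) (Phi : seq 'cV[R]_n)
  (alpha : 'I_n -> 'cV[R]_n) (eta : 'cV[R]_n) (M : nat) :
  is_irred_root_system Phi -> is_base Phi alpha ->
  is_highest_dual_root Phi alpha eta -> (0 < M)%N ->
  (forall lam, inP alpha lam ->
     exists lam' w, [/\ inLambda alpha eta M lam', inW Phi w &
                        congMQ alpha M lam (w *m lam')]) /\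
  (forall lam lam' w, inLambda alpha eta M lam -> inLambda alpha eta M lam' ->
     inW Phi w -> congMQ alpha M lam' (w *m lam) ->
     congMQ alpha M lam' lam /\ congMQ alpha M lam (w *m lam)) /\
  (forall b, inP alpha b -> inMFv alpha eta M b ->
     exists f : 'M[R]_n -> 'M[R]_n * 'cV[R]_n,
       [/\ (forall w, inStabv Phi alpha M b w ->
                      inAffStab Phi alpha (M%:R^-1 *: b) (f w)),
           (forall w1 w2, inStabv Phi alpha M b w1 -> inStabv Phi alpha M b w2 ->
                      f (w1 *m w2) = aff_mul (f w1) (f w2)),
           (forall w1 w2, inStabv Phi alpha M b w1 -> inStabv Phi alpha M b w2 ->
                      f w1 = f w2 -> w1 = w2) &
           (forall g, inAffStab Phi alpha (M%:R^-1 *: b) g ->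
                      exists2 w, inStabv Phi alpha M b w & f w = g)]).
Proof.
move=> irrPhi baseP etaP M_gt0.
have [m etaE] := highest_dual_root_coef irrPhi baseP etaP.
split; [|split].
- by move=> lam; apply: (lambda_orbit_rep irrPhi baseP etaP etaE M_gt0).
- by move=> lam lam' w; apply: (lambda_orbit_uniq irrPhi baseP etaP etaE M_gt0).
- by move=> b _ _; apply: stabv_affstab_iso.
Qed.
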